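(* Let $1\le l\le g$. The power series $Q^l(x_2,\dots,x_{n-1})$ has coefficients in $\mathbb Z_p^n$ and converges uniformly on $D_{0,1}^{n-2}=(p\mathbb Z_p)^{n-2}$, and the sequence of polynomial functions $Q^{l,s}(x_2,\dots,x_{n-1})$, $s=1,2,\dots$, converges uniformly on $D_{0,1}^{n-2}$ to $Q^l(x_2,\dots,x_{n-1})$.
   Context: Let $p$ be an odd prime, $g\ge1$, $n=2g+1$, $p>n$. $\mathbb Z_p$, $\mathbb Q_p$, $|\cdot|_p$ as usual; $D_{0,1}=\{t\in\mathbb Z_p:|t|_p<1\}$; uniform convergence on $S$ means convergence in $\sup_{S}|\cdot|_p$ (coordinatewise). Binomials $\binom{y}{k}=y(y-1)\cdots(y-k+1)/k!$. Fix $1\le l\le g$. For $a=(a_1,\dots,a_{n-1})$ write $X(a)=\prod_{i=2}^{n-2l}x_i^{a_{i-1}}\prod_{i=n-2l+1}^{n-1}x_i^{a_i}$. For a parameter $\mu$ define $Q^{l}[\mu]=(Q_1,\dots,Q_n)$ by: for $1\le j\le n-2l-1$: $Q_j=x_{j+1}\sum\binom{\mu-1}{a_j}\prod_{i\ne j}\binom{\mu}{a_i}X(a)$ over $a$ with $a_1+\dots+a_{n-2l}=a_{n-2l+1}+\dots+a_{n-1}+l-1$; for $j=n-2l$: $Q_j=\sum\binom{\mu-1}{a_j}\prod_{i\ne j}\binom{\mu}{a_i}X(a)$ with the same condition ($l-1$); for $n-2l<j\le n-1$: $Q_j=\sum\binom{\mu-1}{a_j}\prod_{i\ne j}\binom{\mu}{a_i}X(a)$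 over $a$ with $a_1+\dots+a_{n-2l}=a_{n-2l+1}+\dots+a_{n-1}+l$; $Q_n=\sum\prod_{i=1}^{n-1}\binom{\mu}{a_i}X(a)$ over $a$ with $a_1+\dots+a_{n-2l}=a_{n-2l+1}+\dots+a_{n-1}+l$. Here $\prod_{i\ne j}$ is over $i\in\{1,\dots,n-1\}\setminus\{j\}$. Then $Q^l$ is the formal power series $Q^l[-\tfrac12]$ in $x_2,\dots,x_{n-1}$ (sum over all $a\in\mathbb Z_{\ge0}^{n-1}$), and $Q^{l,s}$ is the polynomial $Q^l[\tfrac{p^s-1}2]$ (sum over $a$ with $0\le a_i\le\frac{p^s-1}2$). *)

(* Z_p is modelled concretely as the completion of Z_(p):
   an element of Z_p is a sequence (x_k) of p-integral rationals with
   x_m = x_k (mod p^k) for m >= k; two elements are congruent modulo p^k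
   (i.e. |x - y|_p <= p^-k) iff x_k = y_k (mod p^k). *)
From mathcomp Require Import all_boot all_order all_algebra.
Set Implicit Arguments. Unset Strict Implicit. Unset Printing Implicit Defensive.
Import Order.TTheory GRing.Theory Num.Theory.
Local Open Scope ring_scope.

Definition pint (p : nat) (r : rat) : bool := ~~ (p %| `|denq r|)%N.

Definition pdvd (p k : nat) (r : rat) : bool := pint p (r / (p%:R ^+ k)).

Definition is_zp (p : nat) (x : nat -> rat) : Prop :=
  forall k, pint p (x k) /\ forall m, (k <= m)%N -> pdvd p k (x m - x k).

Definition zp_eqmod (p k : nat) (x y : nat -> rat) : bool := pdvd p k (x k - y k).

(* x (indexed by variables i, each x i an element of Z_p) lies in
   D_{0,1}^{n-2}: x_i in pZ_p for 2 <= i <= n-1 *)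
Definition in_D (p n : nat) (x : nat -> nat -> rat) : Prop :=
  forall i, (2 <= i <= n.-1)%N -> is_zp p (x i) /\ zp_eqmod p 1 (x i) (fun _ => 0).

Definition binr (y : rat) (k : nat) : rat :=
  (\prod_(i < k) (y - i%:R)) / (k`!)%:R.

Definition nn (g : nat) : nat := (2 * g).+1.

Definition Qcond (g l j : nat) (a : nat -> nat) : bool :=
  let n := nn g in
  (\sum_(1 <= i < (n - 2 * l).+1) a i ==
   \sum_((n - 2 * l).+1 <= i < n) a i + (if (j <= n - 2 * l)%N then l.-1 else l))%N.

Definition Qcoef (g : nat) (mu : rat) (j : nat) (a : nat -> nat) : rat :=
  let n := nn g in
  if (j < n)%N then binr (mu - 1) (a j) * \prod_(1 <= i < n | i != j) binr mu (a i)
  else \prod_(1 <= i < n) binr mu (a i).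

Definition Qmon (g l j : nat) (a : nat -> nat) (y : nat -> rat) : rat :=
  let n := nn g in
  (if (j < n - 2 * l)%N then y j.+1 else 1) *
  (\prod_(2 <= i < (n - 2 * l).+1) y i ^+ a i.-1) *
  (\prod_((n - 2 * l).+1 <= i < n) y i ^+ a i).

(* a : {ffun 'I_(n-1) -> 'I_(N+1)} read as (a_1,...,a_{n-1}), a_i = a (i-1) *)
Definition aget (m N : nat) (a : {ffun 'I_m -> 'I_N.+1}) (i : nat) : nat :=
  if i is i'.+1 then
    (if @insub nat (fun t => (t < m)%N) 'I_m i' is Some t then val (a t) else 0%N)
  else 0%N.

Definition Qsum (g l : nat) (mu : rat) (N j : nat) (y : nat -> rat) : rat :=
  \sum_(a : {ffun 'I_(2 * g) -> 'I_N.+1} | Qcond g l j (aget a))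
     Qcoef g mu j (aget a) * Qmon g l j (aget a) y.

Definition Qeval (g l : nat) (mu : rat) (N j : nat) (x : nat -> nat -> rat) : nat -> rat :=
  fun k => Qsum g l mu N j (fun i => x i k).

Definition unif_conv (p n : nat) (f : nat -> nat -> (nat -> nat -> rat) -> nat -> rat)
  (F : nat -> (nat -> nat -> rat) -> nat -> rat) : Prop :=
  forall k, exists S, forall s, (S <= s)%N -> forall x, in_D p n x ->
    forall j, (1 <= j <= n)%N -> zp_eqmod p k (f s j x) (F j x).

From HB Require Import structures.
From mathcomp Require Import all_boot all_order all_algebra.
From mathcomp Require Import zify ring.
From Stdlib Require Import FunctionalExtensionality.
Set Implicit Arguments.
Unset Strict Implicit.
Unset Printing Implicit Defensive.
Import Order.TTheory GRing.Theory Num.Theory.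
Local Open Scope ring_scope.

Definition Zp_loc (p : nat) (r : rat) : bool := coprime p `|denq r|.

Lemma denq_dvd_den (a : int) (b : nat) : (`|denq (a%:~R / b%:R : rat)| %| b)%N.
Proof.
have [->|b_gt0] := posnP b; first exact: dvdn0.
set r := (a%:~R / b%:R : rat).
have b_neq0 : (b%:R : rat) != 0 by rewrite pnatr_eq0 -lt0n.
have e : numq r * b%:Z = a * denq r.
  by apply: (@intr_inj rat); rewrite !rmorphM /= numqE /r pmulrn; field.
have e2 : (`|numq r| * b = `|a| * `|denq r|)%N.
  by rewrite -[b in LHS]/(`|b%:Z|%N) -!abszM e.
have : (`|denq r| %| `|numq r| * b)%N by rewrite e2 dvdn_mull.
by rewrite Gauss_dvdr // coprime_sym coprime_num_den.
Qed.

Lemma Zp_loc_frac p (a : int) (b : nat) : coprime p b -> a%:~R / b%:R \in Zp_loc p.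
Proof. exact: coprime_dvdr (denq_dvd_den a b). Qed.

Lemma Zp_loc_repr p r :
  r \in Zp_loc p -> exists a (b : nat), [/\ (0 < b)%N, coprime p b & r = a%:~R / b%:R].
Proof.
move=> r_int; exists (numq r), `|denq r|%N; split => //; first by rewrite absz_gt0 denq_neq0.
by rewrite natr_absz gtr0_norm ?denq_gt0 // divq_num_den.
Qed.

Fact Zp_loc_subring p : subring_closed (Zp_loc p).
Proof.
split=> [|_ _ /Zp_loc_repr[a [b [b_gt0 pb ->]]] /Zp_loc_repr[c [d [d_gt0 pd ->]]]|
         _ _ /Zp_loc_repr[a [b [b_gt0 pb ->]]] /Zp_loc_repr[c [d [d_gt0 pd ->]]]].
- by rewrite unfold_in /Zp_loc /= coprimen1.
- have -> : a%:~R / b%:R - c%:~R / d%:R = (a * d%:Z - c * b%:Z)%:~R / (b * d)%N%:R :> rat.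
    rewrite natrM rmorphB !rmorphM /= -!pmulrn.
    by field; rewrite !pnatr_eq0 -!lt0n b_gt0 d_gt0.
  by apply: Zp_loc_frac; rewrite coprimeMr pb.
- have -> : a%:~R / b%:R * (c%:~R / d%:R) = (a * c)%:~R / (b * d)%N%:R :> rat.
    by rewrite natrM rmorphM /=; field; rewrite !pnatr_eq0 -!lt0n b_gt0 d_gt0.
  by apply: Zp_loc_frac; rewrite coprimeMr pb.
Qed.

HB.instance Definition _ (p : nat) :=
  GRing.isSubringClosed.Build rat (Zp_loc p) (Zp_loc_subring p).

Lemma Zp_loc_div_coprime p x c : x \in Zp_loc p -> coprime p c -> x / c%:R \in Zp_loc p.
Proof. by move=> hx pc; rewrite -[_^-1]mul1r rpredM // (Zp_loc_frac 1 pc). Qed.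

Definition pideal (p k : nat) (r : rat) : bool := r / p%:R ^+ k \in Zp_loc p.

Lemma pidealE p k r : (r \in pideal p k) = (r / p%:R ^+ k \in Zp_loc p).
Proof. by []. Qed.

Fact pideal_zmod p k : zmod_closed (pideal p k).
Proof.
split; first by rewrite pidealE mul0r rpred0.
by move=> u v; rewrite !pidealE mulrBl; apply: rpredB.
Qed.

HB.instance Definition _ (p k : nat) :=
  GRing.isZmodClosed.Build rat (pideal p k) (pideal_zmod p k).

Lemma pint_Zp_loc p r : prime p -> pint p r = (r \in Zp_loc p).
Proof. by move=> p_prime; rewrite unfold_in /Zp_loc prime_coprime. Qed.

Lemma pdvd_pideal p k r : prime p -> pdvd p k r = (r \in pideal p k).
Proof. by move=> p_prime; rewrite /pdvd pint_Zp_loc. Qed.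

Definition binr_integral (p : nat) (mu : rat) : Prop :=
  forall c, binr mu c \in Zp_loc p /\ binr (mu - 1) c \in Zp_loc p.

Lemma binrS y c : binr y c.+1 = binr y c * (y - c%:R) / c.+1%:R.
Proof.
rewrite /binr big_ord_recr /= factS natrM.
have c_fact_neq0 : ((c`!)%:R : rat) != 0 by rewrite pnatr_eq0 -lt0n fact_gt0.
by field; rewrite c_fact_neq0 andbT addrC natr1 pnatr_eq0.
Qed.

Lemma binr_nat m c : binr m%:R c = 'C(m, c)%:R.
Proof.
elim: c => [|c IHc]; first by rewrite /binr big_ord0 bin0 fact0 divr1.
rewrite binrS IHc.
have cS_neq0 : (c.+1%:R : rat) != 0 by rewrite pnatr_eq0.
have [le_cm | lt_mc] := leqP c m; last first.
  by rewrite (bin_small lt_mc) bin_small ?mul0r // ltnW.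
apply: (mulIf cS_neq0); rewrite mulfVK // -natrB // -!natrM.
by rewrite mulnC -mul_bin_left mulnC.
Qed.

Section PadicArithmetic.

Variable p : nat.
Hypothesis p_prime : prime p.

Lemma expr_p_neq0 k : (p%:R ^+ k : rat) != 0.
Proof. by rewrite expf_neq0 // pnatr_eq0 -lt0n prime_gt0. Qed.

Lemma pideal0 r : (r \in pideal p 0) = (r \in Zp_loc p).
Proof. by rewrite pidealE expr0 divr1. Qed.

Lemma pideal_mulr k x y : x \in pideal p k -> y \in Zp_loc p -> x * y \in pideal p k.
Proof. by rewrite !pidealE mulrAC => hx hy; apply: rpredM. Qed.

Lemma pideal_mul k m x y :
  x \in pideal p k -> y \in pideal p m -> x * y \in pideal p (k + m).
Proof.
rewrite !pidealE => hx hy.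
have -> : x * y / p%:R ^+ (k + m) = (x / p%:R ^+ k) * (y / p%:R ^+ m).
  by rewrite exprD; field; rewrite !expr_p_neq0.
exact: rpredM.
Qed.

Lemma pideal_le m k x : (m <= k)%N -> x \in pideal p k -> x \in pideal p m.
Proof.
rewrite !pidealE => le_mk hx.
have -> : x / p%:R ^+ m = (x / p%:R ^+ k) * p%:R ^+ (k - m).
  by rewrite -{1}(subnK le_mk) exprD; field; rewrite !expr_p_neq0.
by rewrite rpredM ?rpredX ?rpred_nat.
Qed.

Lemma pideal_Zp k x : x \in pideal p k -> x \in Zp_loc p.
Proof. by rewrite -pideal0; apply: pideal_le. Qed.

Lemma pideal_pow k c : c \in Zp_loc p -> p%:R ^+ k * c \in pideal p k.
Proof. by rewrite pidealE [_ * c]mulrC mulfK ?expr_p_neq0. Qed.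

Lemma pideal_exp e y : y \in pideal p 1 -> y ^+ e \in pideal p e.
Proof.
move=> hy; elim: e => [|e IHe]; first by rewrite pideal0 expr0 rpred1.
by rewrite exprS -add1n; apply: pideal_mul.
Qed.

Lemma pideal_prod (I : Type) (r : seq I) (P : pred I) (e : I -> nat) (F : I -> rat) :
  (forall i, P i -> F i \in pideal p (e i)) ->
  \prod_(i <- r | P i) F i \in pideal p (\sum_(i <- r | P i) e i).
Proof.
move=> hF; elim: r => [|i r IHr]; first by rewrite !big_nil pideal0 rpred1.
by rewrite !big_cons; case: ifP => Pi //; apply: pideal_mul => //; apply: hF.
Qed.

Definition congp (k : nat) (u v : rat) : Prop :=
  [/\ u \in Zp_loc p, v \in Zp_loc p & u - v \in pideal p k].

Lemma congp_refl k u : u \in Zp_loc p -> congp k u u.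
Proof. by move=> hu; split; rewrite // subrr rpred0. Qed.

Lemma congp_le m k u v : (m <= k)%N -> congp k u v -> congp m u v.
Proof. by move=> le_mk [hu hv huv]; split => //; apply: pideal_le huv. Qed.

Lemma congp_mul k u u' v v' : congp k u v -> congp k u' v' -> congp k (u * u') (v * v').
Proof.
move=> [hu hv huv] [hu' hv' huv']; split; rewrite ?rpredM //.
have -> : u * u' - v * v' = (u - v) * u' + (u' - v') * v by ring.
by rewrite rpredD // pideal_mulr.
Qed.

Lemma congp_prod k (I : Type) (r : seq I) (P : pred I) (F G : I -> rat) :
  (forall i, P i -> congp k (F i) (G i)) ->
  congp k (\prod_(i <- r | P i) F i) (\prod_(i <- r | P i) G i).
Proof.
move=> hFG; apply: (big_ind2 (congp k)) => //; first exact/congp_refl/rpred1.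
by move=> ? ? ? ?; apply: congp_mul.
Qed.

Lemma congp_exp k u v e : congp k u v -> congp k (u ^+ e) (v ^+ e).
Proof.
move=> huv; elim: e => [|e IHe]; first by rewrite !expr0; apply/congp_refl/rpred1.
by rewrite !exprS; apply: congp_mul.
Qed.

(* p-adic continuity of binomial coefficients: dividing by c! costs at most
   v_p(c!) powers of p. *)
Lemma binr_cong y z s c : congp s y z -> (logn p c`! <= s)%N ->
  binr y c - binr z c \in pideal p (s - logn p c`!).
Proof.
move=> yz le_vs.
have [_ _] : congp s (\prod_(i < c) (y - i%:R)) (\prod_(i < c) (z - i%:R)).
  apply: congp_prod => i _; case: yz => hy hz hyz.
  by split; [rewrite rpredB ?rpred_nat | rewrite rpredB ?rpred_nat | rewrite opprB addrA subrK].
set D := _ - _ => hD.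
have [u pu fact_c] := pfactor_coprime p_prime (fact_gt0 c).
set v := logn p c`! in le_vs fact_c *.
rewrite pidealE.
have un0 : (u%:R : rat) != 0.
  by rewrite pnatr_eq0; apply: contraTneq pu => ->; rewrite prime_coprime // dvdn0.
have -> : (binr y c - binr z c) / p%:R ^+ (s - v) = (D / p%:R ^+ s) / u%:R.
  rewrite /binr /D fact_c natrM natrX -{2}(subnK le_vs) exprD.
  by field; rewrite un0 !expr_p_neq0.
by apply: Zp_loc_div_coprime; rewrite // -pidealE.
Qed.

End PadicArithmetic.

Notation minus_half := (- (1 / 2%:R) : rat).

Section HalfIntegers.

Variable p : nat.
Hypotheses (p_prime : prime p) (p_odd : odd p).

(* The natural number (p^s-1)/2, parameter of Q^{l,s}; it is congruent to
   -1/2 modulo p^s. *)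
Definition halfpow (s : nat) : nat := (p ^ s).-1./2.

Lemma halfpow_sub_half s : (halfpow s)%:R - minus_half = p%:R ^+ s / 2%:R.
Proof.
have ps_gt0 : (0 < p ^ s)%N by rewrite expn_gt0 prime_gt0.
have even_pred : ~~ odd (p ^ s).-1.
  by have := oddX p s; rewrite p_odd orbT -{1}(prednK ps_gt0) /= => ->.
have two_half : 2%:R * (halfpow s)%:R = p%:R ^+ s - 1 :> rat.
  by rewrite -natrM mul2n even_halfK // -natrX -{2}(prednK ps_gt0) -addn1 natrD addrK.
have -> : (halfpow s)%:R = (p%:R ^+ s - 1) / 2%:R :> rat by rewrite -two_half; field.
by field.
Qed.

Lemma halfpow_ge s : (s <= halfpow s)%N.
Proof.
have p_ge3 : (3 <= p)%N.
  by have := prime_gt1 p_prime; case: p p_odd => [|[|[|q]]].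
have lt_2s : (s.*2 < p ^ s)%N.
  elim: s => [|s IHs]; first by rewrite expn_gt0 prime_gt0.
  by rewrite expnS doubleS; nia.
by rewrite -{1}(doubleK s) /halfpow; apply: half_leq; lia.
Qed.

Lemma half_Zp : 1 / 2%:R \in Zp_loc p.
Proof. by rewrite Zp_loc_div_coprime ?rpred1 ?coprimen2. Qed.

Lemma minus_half_Zp : minus_half \in Zp_loc p.
Proof. by rewrite rpredN half_Zp. Qed.

(* Binomials at -1/2 - t are congruent to those at (p^s-1)/2 - t, which are
   Newton binomials of natural numbers. *)
Lemma binr_halfpow_cong t c s : (t <= halfpow s)%N -> (logn p c`! <= s)%N ->
  congp p (s - logn p c`!) (binr ((halfpow s)%:R - t%:R) c) (binr (minus_half - t%:R) c).
Proof.
move=> le_t le_v.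
have nat_Zp : binr ((halfpow s)%:R - t%:R) c \in Zp_loc p.
  by rewrite -natrB // binr_nat rpred_nat.
have args : congp p s ((halfpow s)%:R - t%:R) (minus_half - t%:R).
  split; [by rewrite rpredB ?rpred_nat | by rewrite rpredB ?rpred_nat ?minus_half_Zp |].
  rewrite opprB addrA subrK halfpow_sub_half.
  by apply: pideal_pow => //; rewrite -div1r half_Zp.
have diff := binr_cong p_prime args le_v.
split => //.
set y := binr _ c in nat_Zp diff *; set z := binr _ c in diff *.
have -> : z = y - (y - z) by ring.
by rewrite rpredB // (pideal_Zp p_prime diff).
Qed.

Lemma binr_integral_half : binr_integral p minus_half.
Proof.
move=> c; set s := (1 + logn p c`!)%N.
have shifted_Zp t : (t <= 1)%N -> binr (minus_half - t%:R) c \in Zp_loc p.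
  move=> le_t1; have le_ts : (t <= halfpow s)%N.
    by apply: leq_trans (halfpow_ge s); apply: leq_trans le_t1 _.
  by case: (binr_halfpow_cong (c := c) le_ts (leq_addl _ _)).
by split; [have := shifted_Zp 0%N isT; rewrite subr0 | exact: (shifted_Zp 1%N)].
Qed.

(* So do those of Q^{l,s}, which are Newton binomials. *)
Lemma binr_integral_halfpow s : (0 < s)%N -> binr_integral p (halfpow s)%:R.
Proof.
move=> s_gt0 c; split; first by rewrite binr_nat rpred_nat.
have le_1h : (1 <= halfpow s)%N by apply: leq_trans (halfpow_ge s).
by rewrite -(natrB _ le_1h) binr_nat rpred_nat.
Qed.

Lemma binr_halfpow_cong_large k B c t s : (c <= B)%N -> (t <= 1)%N -> (k + B`! <= s)%N ->
  congp p k (binr ((halfpow s)%:R - t%:R) c) (binr (minus_half - t%:R) c).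
Proof.
move=> le_cB le_t1 le_s.
have lt_vB : (logn p c`! < B`!)%N.
  by apply: leq_trans (ltn_logl p (fact_gt0 c)) _; apply: leq_fact.
have le_ts : (t <= halfpow s)%N.
  apply: leq_trans (halfpow_ge s); apply: leq_trans le_t1 _.
  by apply: leq_trans le_s; rewrite addn_gt0 fact_gt0 orbT.
apply: (congp_le p_prime (k := s - logn p c`!)); first by lia.
by apply: binr_halfpow_cong => //; lia.
Qed.

End HalfIntegers.

Definition Xdeg (g l : nat) (a : nat -> nat) : nat :=
  (\sum_(2 <= i < (nn g - 2 * l).+1) a i.-1 + \sum_((nn g - 2 * l).+1 <= i < nn g) a i)%N.

Lemma leq_term_sum (a : nat -> nat) m n i : (m <= i < n)%N -> (a i <= \sum_(m <= k < n) a k)%N.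
Proof.
move=> hi; rewrite (bigD1_seq i) /= ?leq_addr ?iota_uniq //.
by rewrite mem_iota; lia.
Qed.

(* On the hyperplane defining Q_j, every exponent a_i is at most deg X(a) + l:
   the exponents on either side of the hyperplane bound each other. *)
Lemma Qcond_bound g l j a : (1 <= l <= g)%N -> Qcond g l j a ->
  forall i, (1 <= i <= (nn g).-1)%N -> (a i <= Xdeg g l a + l)%N.
Proof.
move=> hl /eqP cond i hi.
set m := (nn g - 2 * l)%N in cond *.
have m_gt0 : (1 <= m)%N by rewrite /m /nn; lia.
have shift : (\sum_(2 <= k < m.+1) a k.-1 = \sum_(1 <= k < m) a k)%N.
  by rewrite (big_add1 _ _ 1).
rewrite /Xdeg -/m shift; rewrite big_nat_recr //= in cond.
have le_l : ((if (j <= m)%N then l.-1 else l) <= l)%N by case: ifP; lia.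
case: (ltngtP i m) => [lt_im | lt_mi | ->].
- by have := leq_term_sum a (m := 1) (n := m) (i := i); lia.
- by have := leq_term_sum a (m := m.+1) (n := nn g) (i := i); rewrite /nn in hi *; lia.
- by lia.
Qed.

Lemma aget_eq m N M (a : {ffun 'I_m -> 'I_N.+1}) (b : {ffun 'I_m -> 'I_M.+1}) :
  (forall t, val (a t) = val (b t)) -> aget a = aget b.
Proof.
move=> eq_ab; apply: functional_extensionality => -[|i] //=.
by case: insubP => // t _ _; apply: eq_ab.
Qed.

Lemma aget_ord m N (a : {ffun 'I_m -> 'I_N.+1}) (t : 'I_m) : aget a (val t).+1 = val (a t).
Proof.
rewrite /= (insubT (fun x => (x < m)%N) (ltn_ord t)) /=.
by congr (val (a _)); apply: val_inj.
Qed.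

Lemma aget_le m N (a : {ffun 'I_m -> 'I_N.+1}) i : (aget a i <= N)%N.
Proof. by case: i => [|i] //=; case: insubP => // t _ _; rewrite -ltnS. Qed.

Lemma reindex_ffun m N M (P : (nat -> nat) -> bool) (F : (nat -> nat) -> rat) : (N <= M)%N ->
  \sum_(a : {ffun 'I_m -> 'I_N.+1} | P (aget a)) F (aget a) =
  \sum_(b : {ffun 'I_m -> 'I_M.+1} | P (aget b) && [forall t, (val (b t) <= N)%N]) F (aget b).
Proof.
move=> le_NM.
pose cut (b : {ffun 'I_m -> 'I_M.+1}) := [ffun t => (inord (val (b t)) : 'I_N.+1)].
pose widen (a : {ffun 'I_m -> 'I_N.+1}) := [ffun t => (inord (val (a t)) : 'I_M.+1)].
have val_widen a t : widen a t = a t :> nat.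
  by rewrite ffunE /= inordK // (leq_trans (ltn_ord _)).
have cut_widen a : cut (widen a) = a.
  by apply/ffunP => t; apply: val_inj; rewrite ffunE /= val_widen inordK.
have widen_cut b : (widen (cut b) == b) = [forall t, (val (b t) <= N)%N].
  apply/eqP/forallP => [e t | le_bN]; first by rewrite -e /= val_widen -ltnS ltn_ord.
  by apply/ffunP => t; apply: val_inj; rewrite /= val_widen ffunE /= inordK ?ltnS ?le_bN.
have aget_cut (b : {ffun 'I_m -> 'I_M.+1}) : [forall t, (val (b t) <= N)%N] -> aget (cut b) = aget b.
  by move=> /forallP le_bN; apply: aget_eq => t; rewrite ffunE /= inordK // ltnS le_bN.
rewrite (reindex_onto cut widen) //=; apply: eq_big => b.
  by rewrite widen_cut; case: (boolP [forall t, _]) => [/aget_cut -> | _]; rewrite ?andbF.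
by rewrite widen_cut => /andP[_ /aget_cut ->].
Qed.

Section QSeries.

Variable p : nat.
Hypothesis p_prime : prime p.
Variables g l : nat.
Hypothesis l_range : (1 <= l <= g)%N.

Lemma Qcoef_Zp mu j a : binr_integral p mu -> Qcoef g mu j a \in Zp_loc p.
Proof.
move=> hmu; rewrite /Qcoef; case: ifP => _; last by apply: rpred_prod => i _; case: (hmu (a i)).
by rewrite rpredM ?(hmu (a j)).2 //; apply: rpred_prod => i _; case: (hmu (a i)).
Qed.

Lemma Qcoef_cong k mu nu j a B :
  (forall c, (c <= B)%N ->
     congp p k (binr mu c) (binr nu c) /\ congp p k (binr (mu - 1) c) (binr (nu - 1) c)) ->
  (forall i, (a i <= B)%N) -> congp p k (Qcoef g mu j a) (Qcoef g nu j a).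
Proof.
move=> hmu ha; rewrite /Qcoef; case: ifP => _.
  by apply: congp_mul => //; [case: (hmu _ (ha j)) | apply: congp_prod => i _; case: (hmu _ (ha i))].
by apply: congp_prod => // i _; case: (hmu _ (ha i)).
Qed.

Lemma Qmon_cong k j a y z : (1 <= j)%N ->
  (forall i, (2 <= i <= (nn g).-1)%N -> congp p k (y i) (z i)) ->
  congp p k (Qmon g l j a y) (Qmon g l j a z).
Proof.
move=> hj hyz; rewrite /Qmon.
apply: congp_mul => //; [apply: congp_mul => //|].
- case: ifP => hjn; last exact/congp_refl/rpred1.
  by apply: hyz; rewrite /nn in hjn *; lia.
- rewrite big_nat_cond [X in congp _ _ _ X]big_nat_cond.
  apply: congp_prod => // i /andP[hi _]; apply: congp_exp => //.
  by apply: hyz; rewrite /nn in hi *; lia.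
- rewrite big_nat_cond [X in congp _ _ _ X]big_nat_cond.
  apply: congp_prod => // i /andP[hi _]; apply: congp_exp => //.
  by apply: hyz; rewrite /nn in hi *; lia.
Qed.

Lemma Qmon_Zp j a y : (1 <= j)%N ->
  (forall i, (2 <= i <= (nn g).-1)%N -> y i \in Zp_loc p) -> Qmon g l j a y \in Zp_loc p.
Proof.
move=> hj hy.
by case: (Qmon_cong a (k := 0) hj (fun i hi => congp_refl 0 (hy i hi))).
Qed.

Lemma Qmon_pideal j a y : (1 <= j)%N ->
  (forall i, (2 <= i <= (nn g).-1)%N -> y i \in pideal p 1) ->
  Qmon g l j a y \in pideal p (Xdeg g l a).
Proof.
move=> hj hy; rewrite /Qmon /Xdeg -[X in pideal _ X]add0n addnA.
apply: pideal_mul => //; [apply: pideal_mul => //|].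
- rewrite pideal0; case: ifP => hjn; last exact: rpred1.
  by apply: (pideal_Zp p_prime (k := 1)); apply: hy; rewrite /nn in hjn *; lia.
- rewrite big_nat_cond [X in pideal _ X]big_nat_cond.
  apply: pideal_prod => // i /andP[hi _]; apply: pideal_exp => //.
  by apply: hy; rewrite /nn in hi *; lia.
- rewrite big_nat_cond [X in pideal _ X]big_nat_cond.
  apply: pideal_prod => // i /andP[hi _]; apply: pideal_exp => //.
  by apply: hy; rewrite /nn in hi *; lia.
Qed.

Lemma Qsum_Zp mu N j y : (1 <= j)%N -> binr_integral p mu ->
  (forall i, (2 <= i <= (nn g).-1)%N -> y i \in Zp_loc p) -> Qsum g l mu N j y \in Zp_loc p.
Proof.
by move=> hj hmu hy; apply: rpred_sum => a _; rewrite rpredM ?Qcoef_Zp ?Qmon_Zp.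
Qed.

Lemma Qsum_split mu N M j y : (N <= M)%N ->
  Qsum g l mu M j y - Qsum g l mu N j y =
  \sum_(b : {ffun 'I_(2 * g) -> 'I_M.+1} | Qcond g l j (aget b) && ~~ [forall t, (val (b t) <= N)%N])
     Qcoef g mu j (aget b) * Qmon g l j (aget b) y.
Proof.
move=> le_NM; rewrite /Qsum (reindex_ffun _ _ (fun a => Qcoef g mu j a * Qmon g l j a y) le_NM).
by rewrite (bigID (fun b : {ffun _ -> _} => [forall t, (val (b t) <= N)%N])) /= addrC addrK.
Qed.

(* Uniform Cauchy property of the truncations: if the variables are
   p-integral, and divisible by p when k > 0, then the truncations at N and
   M >= N >= k + l agree modulo p^k. *)
Lemma Qsum_tail mu N M j k y : (1 <= j)%N -> (k + l <= N <= M)%N -> binr_integral p mu ->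
  (forall i, (2 <= i <= (nn g).-1)%N -> y i \in pideal p (minn k 1)) ->
  Qsum g l mu M j y - Qsum g l mu N j y \in pideal p k.
Proof.
move=> hj /andP[le_kN le_NM] hmu hy.
have y_Zp i : (2 <= i <= (nn g).-1)%N -> y i \in Zp_loc p.
  by move=> hi; apply: (pideal_Zp p_prime (hy i hi)).
rewrite Qsum_split //; apply: rpred_sum => b /andP[cond_b /forallPn[t big_t]].
rewrite mulrC; apply: pideal_mulr => //; last exact: Qcoef_Zp.
have [->|k_gt0] := posnP k; first by rewrite pideal0 Qmon_Zp.
apply: (pideal_le p_prime (k := Xdeg g l (aget b))).
  have := Qcond_bound l_range cond_b (i := (val t).+1); rewrite aget_ord /=.
  by move: big_t (ltn_ord t); rewrite /= /nn; lia.
apply: Qmon_pideal => // i hi; have := hy i hi.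
by rewrite (minn_idPr _).
Qed.

Lemma Qsum_cong k mu nu N j y z :
  (forall b : {ffun 'I_(2 * g) -> 'I_N.+1},
     congp p k (Qcoef g mu j (aget b)) (Qcoef g nu j (aget b))) ->
  (forall a, congp p k (Qmon g l j a y) (Qmon g l j a z)) ->
  Qsum g l mu N j y - Qsum g l nu N j z \in pideal p k.
Proof.
move=> hcoef hmon; rewrite /Qsum -sumrB; apply: rpred_sum => b _.
by case: (congp_mul (hcoef b) (hmon (aget b))).
Qed.

End QSeries.

Section Proposition.

Variables p g l : nat.
Hypotheses (p_prime : prime p) (p_odd : odd p) (l_range : (1 <= l <= g)%N).

Lemma in_D_level x k i : in_D p (nn g) x -> (2 <= i <= (nn g).-1)%N ->
  x i k \in pideal p (minn k 1).
Proof.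
move=> hx hi; have [zp_x x_eq0] := hx i hi.
have [->|k_gt0] := posnP k; first by rewrite pideal0 -pint_Zp_loc //; case: (zp_x 0%N).
have [_ cauchy] := zp_x 1%N.
have -> : x i k = (x i k - x i 1%N) + (x i 1%N - 0) by ring.
rewrite (minn_idPr k_gt0) rpredD // -(pdvd_pideal _ _ p_prime); first exact: cauchy.
exact: x_eq0.
Qed.

Lemma in_D_cong x k m i : in_D p (nn g) x -> (2 <= i <= (nn g).-1)%N -> (k <= m)%N ->
  congp p k (x i m) (x i k).
Proof.
move=> hx hi le_km; have [zp_x _] := hx i hi.
have [int_m _] := zp_x m; have [int_k cauchy] := zp_x k.
by split; rewrite -?(pint_Zp_loc _ p_prime) -?(pdvd_pideal _ _ p_prime) //; apply: cauchy.
Qed.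

(* The limit Q^l(x): at level k, the truncation at k + l evaluated at the
   level-k approximations of the coordinates. *)
Definition Qlim (j : nat) (x : nat -> nat -> rat) (k : nat) : rat :=
  Qeval g l minus_half (k + l) j x k.

Lemma Qlim_is_zp x j : in_D p (nn g) x -> (1 <= j)%N -> is_zp p (Qlim j x).
Proof.
move=> hx hj k; split.
  rewrite pint_Zp_loc //; apply: Qsum_Zp => //; first exact: binr_integral_half.
  by move=> i hi; apply: pideal_Zp (in_D_level k hx hi).
move=> m le_km; rewrite pdvd_pideal // /Qlim /Qeval.
rewrite -[X in X - _](subrK (Qsum g l minus_half (k + l) j (fun i => x i m))) -addrA.
apply: rpredD.
  apply: Qsum_tail => //; [by rewrite leqnn leq_add2r | exact: binr_integral_half |].
  by move=> i hi; apply: pideal_le (in_D_level m hx hi); lia.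
apply: Qsum_cong => [b | a]; first by apply/congp_refl/Qcoef_Zp/binr_integral_half.
by apply: Qmon_cong => // i hi; apply: in_D_cong.
Qed.

Lemma Qtrunc_conv : unif_conv p (nn g) (fun N j x => Qeval g l minus_half N j x) Qlim.
Proof.
move=> k; exists (k + l)%N => N le_N x hx j /andP[hj _].
rewrite /zp_eqmod pdvd_pideal // /Qlim /Qeval.
apply: Qsum_tail => //; [by rewrite leqnn le_N | exact: binr_integral_half |].
by move=> i hi; apply: in_D_level.
Qed.

Lemma Qls_conv :
  unif_conv p (nn g) (fun s j x => Qeval g l (halfpow p s)%:R (halfpow p s) j x) Qlim.
Proof.
move=> k; exists (k + l + (k + l)`!)%N => s le_s x hx j /andP[hj _].
have le_s_half := halfpow_ge p_prime p_odd s.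
have s_gt0 : (0 < s)%N by have := fact_gt0 (k + l); lia.
rewrite /zp_eqmod pdvd_pideal // /Qlim /Qeval.
rewrite -[X in X - _](subrK (Qsum g l (halfpow p s)%:R (k + l) j (fun i => x i k))) -addrA.
apply: rpredD.
  apply: Qsum_tail => //; [by rewrite leqnn /=; lia | exact: binr_integral_halfpow |].
  by move=> i hi; apply: in_D_level.
apply: Qsum_cong => [b | a]; last first.
  by apply/congp_refl/Qmon_Zp => // i hi; apply: pideal_Zp (in_D_level k hx hi).
apply: (@Qcoef_cong p g k _ _ j _ (k + l)) => [c le_c | i]; last exact: aget_le.
have cong_t t : (t <= 1)%N ->
    congp p k (binr ((halfpow p s)%:R - t%:R) c) (binr (minus_half - t%:R) c).
  by move=> le_t1; apply: binr_halfpow_cong_large le_c le_t1 _; lia.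
by split; [have := cong_t 0%N isT; rewrite !subr0 | exact: (cong_t 1%N)].
Qed.

End Proposition.

Unset Implicit Arguments.

Theorem proposition10p4 (p g l : nat) :
  prime p -> odd p -> (1 <= g)%N -> (1 <= l <= g)%N -> (nn g < p)%N ->
  (* coefficients of Q^l = Q^l[-1/2] lie in Z_p *)
  (forall (j : nat) (a : nat -> nat), (1 <= j <= nn g)%N -> Qcond g l j a ->
      pint p (Qcoef g (- (1 / 2%:R)) j a)) /\
  exists F : nat -> (nat -> nat -> rat) -> nat -> rat,
    (forall x, in_D p (nn g) x -> forall j, (1 <= j <= nn g)%N -> is_zp p (F j x)) /\
    (* partial sums (0 <= a_i <= N) of Q^l converge uniformly to F *)
    unif_conv p (nn g) (fun N j x => Qeval g l (- (1 / 2%:R)) N j x) F /\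
    (* Q^{l,s} = Q^l[(p^s-1)/2] (0 <= a_i <= (p^s-1)/2) converge uniformly to F *)
    unif_conv p (nn g)
      (fun s j x => Qeval g l ((p ^ s).-1./2)%:R ((p ^ s).-1./2) j x) F.
Proof.
move=> p_prime p_odd _ l_range _; split.
  by move=> j a _ _; rewrite pint_Zp_loc //; apply/Qcoef_Zp/binr_integral_half.
exists (Qlim g l); split; last split.
- by move=> x hx j /andP[hj _]; apply: Qlim_is_zp.
- exact: Qtrunc_conv.
- exact: Qls_conv.
Qed.
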